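(* Let $d\ge2$ and let $\mathbf{p}^\star$ be a maximizer of the problem $$\max\Big\{\frac{\prod_{i=1}^dp_i}{D_1(\mathbf{p})^d}\;:\;\mathbf{p}\in(0,\infty)^d,\ p_1=1,\ D_1(\mathbf{p})^2\ge D_j(\mathbf{p})^2\text{ for all }j\in\{2,\dots,d\}\Big\}.$$ Then $\mathbf{p}^\star$ is a solution of the Karush–Kuhn–Tucker system below with multipliers $(\mu_2,\dots,\mu_d)\neq\mathbf{0}$, i.e. there exists $k\in\{2,\dots,d\}$ with $\mu_k>0$.
   Context: For $k\in\{1,\dots,d\}$ let $w_{k,i}=0$ for $i<k$, $w_{k,k}=k$, $w_{k,i}=i-1$ for $k<i\le d$, and $D_k(\mathbf{p})=\sqrt{\sum_{i=1}^dw_{k,i}^2p_i^2}$. Let $F_1(p_2,\dots,p_d)=\prod_{i=2}^dp_i/D_1(1,p_2,\dots,p_d)^d$, and regard $D_k$ as functions of $(p_2,\dots,p_d)$ with $p_1=1$. The Karush–Kuhn–Tucker system is: for all $j\in\{2,\dots,d\}$, $$\frac{\partial F_1}{\partial p_j}(\mathbf{p})=\sum_{i=2}^d\mu_i\frac{\partial}{\partial p_j}\big(D_i(\mathbf{p})^2-D_1(\mathbf{p})^2\big),\qquad \mu_j\big(D_j(\mathbf{p})^2-D_1(\mathbf{p})^2\big)=0,\qquad \mu_j\ge0,\qquad D_j(\mathbf{p})\le D_1(\mathbf{p}).$$ *)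

From Stdlib Require Import Reals Arith.
From Coquelicot Require Import Coquelicot.
Open Scope R_scope.

Fixpoint sumR (f : nat -> R) (m k : nat) : R :=
  match k with O => 0 | S k' => f m + sumR f (S m) k' end.

Fixpoint prodR (f : nat -> R) (m k : nat) : R :=
  match k with O => 1 | S k' => f m * prodR f (S m) k' end.

Definition w (k i : nat) : R :=
  if (i <? k)%nat then 0 else if (i =? k)%nat then INR k else INR (i - 1).

(* D_k(p) = sqrt(sum_{i=1}^d w_{k,i}^2 p_i^2); vectors are p : nat -> R, indices 1..d. *)
Definition D (d k : nat) (p : nat -> R) : R :=
  sqrt (sumR (fun i => (w k i) ^ 2 * (p i) ^ 2) 1 d).

Definition F1 (d : nat) (p : nat -> R) : R :=
  prodR p 2 (d - 1) / (D d 1 p) ^ d.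

Definition upd (p : nat -> R) (j : nat) (t : R) : nat -> R :=
  fun i => if (i =? j)%nat then t else p i.

Definition partial (G : (nat -> R) -> R) (j : nat) (p : nat -> R) : R :=
  Derive (fun t => G (upd p j t)) (p j).

Definition feasible (d : nat) (p : nat -> R) : Prop :=
  (forall i, (1 <= i <= d)%nat -> 0 < p i) /\ p 1%nat = 1 /\
  (forall j, (2 <= j <= d)%nat -> (D d j p) ^ 2 <= (D d 1 p) ^ 2).

Definition is_maximizer (d : nat) (p : nat -> R) : Prop :=
  feasible d p /\ forall q, feasible d q -> F1 d q <= F1 d p.

Definition KKT (d : nat) (p mu : nat -> R) : Prop :=
  forall j, (2 <= j <= d)%nat ->
    partial (F1 d) j p =
      sumR (fun i => mu i *
              partial (fun q => (D d i q) ^ 2 - (D d 1 q) ^ 2) j p) 2 (d - 1)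
    /\ mu j * ((D d j p) ^ 2 - (D d 1 p) ^ 2) = 0
    /\ 0 <= mu j
    /\ D d j p <= D d 1 p.

From Pilot Require Import Defs.
From Stdlib Require Import Reals Arith Lra Lia Psatz.
From Coquelicot Require Import Coquelicot.
Open Scope R_scope.

(* Let [T_n] be [D_1^2] restricted to the coordinates [1..n]. Then
   [D_j^2 = T_d - T_j + j^2 p_j^2], so the [j]-th constraint only involves [T_j], and since
   [T_1 = p_1^2 = 1], [F_1^2] telescopes into the product over [m = 1..d-1] of
   [p_(m+1)^2 T_m^m / T_(m+1)^(m+1)], a function of [X = T_m] and [a = m^2 p_(m+1)^2] alone.
   By Bernoulli's inequality (weighted AM-GM) each factor is at most a constant, with equality
   iff [X = m a]; for [m = 1] the constraint [3 p_2^2 <= 1], i.e. [3 a <= X], moves it to [X = 3 a].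
   All these equalities hold at [p_2 = 1/sqrt 3], [p_i = sqrt(2/3)/(i-1)], so every maximizer
   satisfies them, which determines it. There [dF_1/dp_j] vanishes for [j >= 3] and is positive
   for [j = 2], while [D_2^2 - D_1^2] depends on [p_j] only for [j = 2]; hence
   [mu_2 = (dF_1/dp_2) / (6 p_2) > 0] and [mu_j = 0] otherwise solve the KKT system. *)

Lemma sumR_S f m k : sumR f m (S k) = sumR f m k + f (m + k)%nat.
Proof.
  revert m; induction k as [|k IH]; intro m.
  - simpl. rewrite Nat.add_0_r; ring.
  - change (sumR f m (S (S k))) with (f m + sumR f (S m) (S k)).
    rewrite IH. replace (S m + k)%nat with (m + S k)%nat by lia. simpl. ring.
Qed.

Lemma prodR_S f m k : prodR f m (S k) = prodR f m k * f (m + k)%nat.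
Proof.
  revert m; induction k as [|k IH]; intro m.
  - simpl. rewrite Nat.add_0_r; ring.
  - change (prodR f m (S (S k))) with (f m * prodR f (S m) (S k)).
    rewrite IH. replace (S m + k)%nat with (m + S k)%nat by lia. simpl. ring.
Qed.

Lemma sumR_ext f g m k : (forall i, (m <= i < m + k)%nat -> f i = g i) ->
  sumR f m k = sumR g m k.
Proof.
  revert m; induction k as [|k IH]; intros m H; simpl; auto.
  rewrite H by lia. rewrite (IH (S m)) by (intros; apply H; lia). reflexivity.
Qed.

Lemma prodR_ext f g m k : (forall i, (m <= i < m + k)%nat -> f i = g i) ->
  prodR f m k = prodR g m k.
Proof.
  revert m; induction k as [|k IH]; intros m H; simpl; auto.
  rewrite H by lia. rewrite (IH (S m)) by (intros; apply H; lia). reflexivity.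
Qed.

Lemma sumR_nonneg f m k : (forall i, (m <= i < m + k)%nat -> 0 <= f i) ->
  0 <= sumR f m k.
Proof.
  revert m; induction k as [|k IH]; intros m H; simpl; [lra|].
  assert (0 <= f m) by (apply H; lia).
  assert (0 <= sumR f (S m) k) by (apply IH; intros; apply H; lia).
  lra.
Qed.

Lemma sumR_zero f m k : (forall i, (m <= i < m + k)%nat -> f i = 0) ->
  sumR f m k = 0.
Proof.
  revert m; induction k as [|k IH]; intros m H; simpl; [lra|].
  rewrite H by lia. rewrite IH by (intros; apply H; lia). ring.
Qed.

Lemma sumR_single x g j m k : (m <= j < m + k)%nat ->
  sumR (fun i => (if (i =? j)%nat then x else 0) * g i) m k = x * g j.
Proof.
  revert m; induction k as [|k IH]; intros m Hj; [lia|]. simpl.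
  destruct (Nat.eqb_spec m j) as [->|Hne].
  - rewrite sumR_zero; [ring|].
    intros i Hi. destruct (Nat.eqb_spec i j); [lia|ring].
  - rewrite IH by lia. ring.
Qed.

Lemma prodR_pos f m k : (forall i, (m <= i < m + k)%nat -> 0 < f i) ->
  0 < prodR f m k.
Proof.
  revert m; induction k as [|k IH]; intros m H; simpl; [lra|].
  apply Rmult_lt_0_compat; [apply H; lia | apply IH; intros; apply H; lia].
Qed.

Lemma prodR_pow2 f m k : prodR f m k ^ 2 = prodR (fun i => f i ^ 2) m k.
Proof.
  revert m; induction k as [|k IH]; intros m; simpl; [ring|].
  rewrite <- IH. ring.
Qed.

Lemma prodR_le f g m k :
  (forall i, (m <= i < m + k)%nat -> 0 < f i <= g i) ->
  prodR f m k <= prodR g m k.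
Proof.
  revert m; induction k as [|k IH]; intros m H; simpl; [lra|].
  assert (0 < f m <= g m) by (apply H; lia).
  assert (0 < prodR f (S m) k) by (apply prodR_pos; intros; apply H; lia).
  assert (prodR f (S m) k <= prodR g (S m) k) by (apply IH; intros; apply H; lia).
  nra.
Qed.

Lemma prodR_le_eq f g m k :
  (forall i, (m <= i < m + k)%nat -> 0 < f i <= g i) ->
  prodR g m k <= prodR f m k ->
  forall i, (m <= i < m + k)%nat -> f i = g i.
Proof.
  revert m; induction k as [|k IH]; intros m H Hgf i Hi; [lia|].
  simpl in Hgf.
  assert (0 < f m <= g m) by (apply H; lia).
  assert (0 < prodR f (S m) k) by (apply prodR_pos; intros; apply H; lia).
  assert (prodR f (S m) k <= prodR g (S m) k)
    by (apply prodR_le; intros; apply H; lia).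
  assert (Hfm : f m = g m) by nra.
  destruct (Nat.eq_dec i m) as [->|]; auto.
  apply (IH (S m)); [intros; apply H; lia | nra | lia].
Qed.

Lemma Rdiv_le_cross a b c d : 0 < b -> 0 < d -> a * d <= c * b -> a / b <= c / d.
Proof.
  intros Hb Hd H. apply (Rmult_le_reg_r (b * d)); [nra|].
  replace (a / b * (b * d)) with (a * d) by (field; lra).
  replace (c / d * (b * d)) with (c * b) by (field; lra). exact H.
Qed.

Lemma Rdiv_eq_cross a b c d : 0 < b -> 0 < d -> a / b = c / d -> a * d = c * b.
Proof.
  intros Hb Hd H.
  replace (a * d) with (a / b * (b * d)) by (field; lra).
  rewrite H. field. lra.
Qed.

Lemma bernoulli n u : -1 <= u -> 1 + INR n * u <= (1 + u) ^ n.
Proof.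
  intro Hu; induction n as [|n IH]; [simpl; lra|].
  rewrite S_INR. simpl pow.
  assert (0 <= INR n) by apply pos_INR. nra.
Qed.

Lemma bernoulli_strict n u : (2 <= n)%nat -> -1 < u -> u <> 0 ->
  1 + INR n * u < (1 + u) ^ n.
Proof.
  intros Hn Hu Hu0. destruct n as [|n]; [lia|].
  assert (H := bernoulli n u ltac:(lra)).
  assert (1 <= INR n) by (apply (le_INR 1); lia).
  assert (0 < u * u) by nra.
  rewrite S_INR. simpl pow. nra.
Qed.

(* Bernoulli's inequality at [u] is the weighted AM-GM inequality between [X/m] (weight [m]) and [a]. *)
Lemma amgm_as_bernoulli m X a : (1 <= m)%nat -> 0 < X -> 0 < a ->
  let u := (INR m * a - X) / ((INR m + 1) * X) in
  INR m ^ m * (X + a) ^ S m - INR (S m) ^ S m * (a * X ^ m) =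
  ((INR m + 1) * X) ^ S m / INR m * ((1 + u) ^ S m - (1 + INR (S m) * u)).
Proof.
  intros Hm HX Ha u.
  assert (1 <= INR m) by (apply (le_INR 1); lia).
  assert (Hu : 1 + u = INR m * (X + a) / ((INR m + 1) * X)) by (unfold u; field; lra).
  assert (Hl : 1 + INR (S m) * u = INR m * a / X) by (rewrite S_INR; unfold u; field; lra).
  rewrite Hu, Hl, S_INR. unfold Rdiv.
  rewrite !Rpow_mult_distr, pow_inv, Rpow_mult_distr. simpl pow.
  field. repeat split; try lra; apply pow_nonzero; lra.
Qed.

Lemma pow_amgm_le m X a : (1 <= m)%nat -> 0 < X -> 0 < a ->
  INR (S m) ^ S m * (a * X ^ m) <= INR m ^ m * (X + a) ^ S m.
Proof.
  intros Hm HX Ha.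
  pose proof (amgm_as_bernoulli m X a Hm HX Ha) as E; cbv zeta in E.
  set (u := (INR m * a - X) / ((INR m + 1) * X)) in E.
  assert (Hm1 : 1 <= INR m) by (apply (le_INR 1); lia).
  assert (Hu : -1 <= u) by (unfold u; apply Rcomplements.Rle_div_r; nra).
  assert (0 <= ((INR m + 1) * X) ^ S m / INR m)
    by (apply Rdiv_le_0_compat; [apply pow_le|]; nra).
  assert (B := bernoulli (S m) u Hu). nra.
Qed.

Lemma pow_amgm_eq m X a : (1 <= m)%nat -> 0 < X -> 0 < a ->
  INR (S m) ^ S m * (a * X ^ m) = INR m ^ m * (X + a) ^ S m -> X = INR m * a.
Proof.
  intros Hm HX Ha Heq.
  pose proof (amgm_as_bernoulli m X a Hm HX Ha) as E; cbv zeta in E.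
  set (u := (INR m * a - X) / ((INR m + 1) * X)) in E.
  assert (Hm1 : 1 <= INR m) by (apply (le_INR 1); lia).
  destruct (Req_dec X (INR m * a)) as [|Hne]; auto. exfalso.
  assert (Hu0 : u <> 0).
  { unfold u; intro Hz. apply Rmult_integral in Hz as [Hz|Hz]; [lra|].
    revert Hz; apply Rinv_neq_0_compat; nra. }
  assert (Hu : -1 < u) by (unfold u; apply Rcomplements.Rlt_div_r; nra).
  assert (0 < ((INR m + 1) * X) ^ S m / INR m)
    by (apply Rdiv_lt_0_compat; [apply pow_lt|]; nra).
  assert (B := bernoulli_strict (S m) u ltac:(lia) Hu Hu0). nra.
Qed.

Definition amgm_ratio (m : nat) (X a : R) : R := a * X ^ m / (X + a) ^ S m.

Lemma amgm_ratio_pos m X a : 0 < X -> 0 < a -> 0 < amgm_ratio m X a.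
Proof.
  intros HX Ha. unfold amgm_ratio.
  apply Rdiv_lt_0_compat; [apply Rmult_lt_0_compat; [|apply pow_lt]|apply pow_lt]; lra.
Qed.

Lemma amgm_ratio_le m X a : (1 <= m)%nat -> 0 < X -> 0 < a ->
  amgm_ratio m X a <= INR m ^ m / INR (S m) ^ S m.
Proof.
  intros Hm HX Ha. unfold amgm_ratio.
  apply Rdiv_le_cross; [apply pow_lt; lra | apply pow_lt, lt_0_INR; lia |].
  rewrite Rmult_comm. apply pow_amgm_le; auto.
Qed.

Lemma amgm_ratio_eq m X a : (1 <= m)%nat -> 0 < X -> 0 < a ->
  amgm_ratio m X a = INR m ^ m / INR (S m) ^ S m -> X = INR m * a.
Proof.
  intros Hm HX Ha Heq. unfold amgm_ratio in Heq.
  apply Rdiv_eq_cross in Heq; [|apply pow_lt; lra | apply pow_lt, lt_0_INR; lia].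
  apply pow_amgm_eq; auto. rewrite <- Heq. ring.
Qed.

Lemma amgm_ratio_at m a : 0 < a ->
  amgm_ratio m (INR m * a) a = INR m ^ m / INR (S m) ^ S m.
Proof.
  intro Ha. unfold amgm_ratio.
  replace (INR m * a + a) with (INR (S m) * a) by (rewrite S_INR; ring).
  assert (HN : INR (S m) <> 0) by (apply not_0_INR; lia).
  set (N := INR (S m)) in *. rewrite !Rpow_mult_distr. simpl pow.
  field. repeat split; auto; try lra; apply pow_nonzero; lra.
Qed.

(* Unconstrained, the maximum would sit at [X = a]; the constraint pushes it to [X = 3 a]. *)
Lemma amgm_ratio1_le X a : 0 < a -> 3 * a <= X -> amgm_ratio 1 X a <= 3 / 16.
Proof.
  intros Ha H3. unfold amgm_ratio.
  apply Rdiv_le_cross; [apply pow_lt | |]; nra.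
Qed.

Lemma amgm_ratio1_eq X a : 0 < a -> 3 * a <= X -> amgm_ratio 1 X a = 3 / 16 -> X = 3 * a.
Proof.
  intros Ha H3 Heq. unfold amgm_ratio in Heq.
  apply Rdiv_eq_cross in Heq; [|apply pow_lt | ]; nra.
Qed.

Lemma amgm_ratio1_at a : 0 < a -> amgm_ratio 1 (3 * a) a = 3 / 16.
Proof. intro Ha. unfold amgm_ratio. field. lra. Qed.

Lemma w_below k i : (i < k)%nat -> w k i = 0.
Proof. intro H; unfold w. destruct (Nat.ltb_spec i k); [reflexivity | lia]. Qed.

Lemma w_diag k : w k k = INR k.
Proof. unfold w. rewrite Nat.ltb_irrefl, Nat.eqb_refl. reflexivity. Qed.

Lemma w_above k i : (k < i)%nat -> w k i = INR (i - 1).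
Proof.
  intro H; unfold w.
  destruct (Nat.ltb_spec i k); [lia|]. destruct (Nat.eqb_spec i k); [lia | reflexivity].
Qed.

Definition T (q : nat -> R) (n : nat) : R := sumR (fun i => w 1 i ^ 2 * q i ^ 2) 1 n.

Lemma T_nonneg q n : 0 <= T q n.
Proof. apply sumR_nonneg; intros; apply Rmult_le_pos; apply pow2_ge_0. Qed.

Lemma T_1 q : T q 1 = q 1%nat ^ 2.
Proof. unfold T; simpl. rewrite w_diag. simpl. ring. Qed.

Lemma T_S q n : (1 <= n)%nat -> T q (S n) = T q n + INR n ^ 2 * q (S n) ^ 2.
Proof.
  intro H. unfold T. rewrite sumR_S, w_above by lia.
  replace (1 + n)%nat with (S n) by lia. replace (S n - 1)%nat with n by lia. reflexivity.
Qed.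

Lemma T_ge1 q n : q 1%nat = 1 -> (1 <= n)%nat -> 1 <= T q n.
Proof.
  intros H1 Hn. induction n as [|n IH]; [lia|].
  destruct (Nat.eq_dec n 0) as [->|]; [rewrite T_1, H1; lra|].
  rewrite T_S by lia. specialize (IH ltac:(lia)).
  assert (0 <= INR n ^ 2 * q (S n) ^ 2) by (apply Rmult_le_pos; apply pow2_ge_0).
  lra.
Qed.

Lemma D1_sq d q : Defs.D d 1 q ^ 2 = T q d.
Proof. unfold Defs.D. rewrite pow2_sqrt; [reflexivity | apply T_nonneg]. Qed.

Lemma sum_wj_sq q j n : (2 <= j)%nat ->
  sumR (fun i => w j i ^ 2 * q i ^ 2) 1 n =
  if (n <? j)%nat then 0 else T q n - T q j + INR j ^ 2 * q j ^ 2.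
Proof.
  intro Hj. induction n as [|n IH].
  - simpl. destruct (Nat.ltb_spec 0 j); [reflexivity | lia].
  - rewrite sumR_S, IH. replace (1 + n)%nat with (S n) by lia.
    destruct (Nat.ltb_spec (S n) j), (Nat.ltb_spec n j); try lia.
    + rewrite w_below by lia. ring.
    + assert (S n = j) as <- by lia. rewrite w_diag. ring.
    + rewrite T_S, w_above by lia. replace (S n - 1)%nat with n by lia. ring.
Qed.

Lemma Dj_sq d q j : (2 <= j <= d)%nat ->
  Defs.D d j q ^ 2 = T q d - T q j + INR j ^ 2 * q j ^ 2.
Proof.
  intro H. unfold Defs.D. rewrite pow2_sqrt.
  - rewrite sum_wj_sq by lia. destruct (Nat.ltb_spec d j); [lia | reflexivity].
  - apply sumR_nonneg; intros; apply Rmult_le_pos; apply pow2_ge_0.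
Qed.

Lemma constraint_iff d q j : (2 <= j <= d)%nat ->
  Defs.D d j q ^ 2 <= Defs.D d 1 q ^ 2 <-> INR j ^ 2 * q j ^ 2 <= T q j.
Proof. intro H. rewrite Dj_sq, D1_sq by lia. lra. Qed.

Lemma feasible_constraint2 d q : (2 <= d)%nat -> feasible d q -> 3 * q 2%nat ^ 2 <= 1.
Proof.
  intros Hd [_ [H1 Hcon]].
  assert (H2 := proj1 (constraint_iff d q 2 ltac:(lia)) (Hcon 2%nat ltac:(lia))).
  rewrite T_S, T_1, H1 in H2 by lia. simpl INR in H2. lra.
Qed.

Definition F1sq_factor (q : nat -> R) (m : nat) : R :=
  amgm_ratio m (T q m) (INR m ^ 2 * q (S m) ^ 2) / INR m ^ 2.

Lemma F1_sq d q : F1 d q ^ 2 = prodR (fun i => q i ^ 2) 2 (d - 1) / T q d ^ d.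
Proof.
  unfold F1, Defs.D. fold (T q d).
  rewrite <- prodR_pow2. unfold Rdiv. rewrite Rpow_mult_distr, pow_inv.
  rewrite <- pow_mult, Nat.mul_comm, pow_mult, pow2_sqrt by apply T_nonneg.
  reflexivity.
Qed.

(* Since [T q 1 = 1], the quotient [prod q_i^2 / T_d^d] telescopes through the [T_m^m]. *)
Lemma F1_sq_telescope d q : q 1%nat = 1 -> (1 <= d)%nat ->
  F1 d q ^ 2 = prodR (F1sq_factor q) 1 (d - 1).
Proof.
  intros H1 Hd. rewrite F1_sq.
  replace d with (S (d - 1)) at 2 3 by lia. generalize (d - 1)%nat as n.
  induction n as [|n IH].
  - simpl. rewrite T_1, H1. field.
  - rewrite !prodR_S, <- IH. replace (2 + n)%nat with (S (S n)) by lia.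
    replace (1 + n)%nat with (S n) by lia.
    unfold F1sq_factor, amgm_ratio. rewrite (T_S q (S n)) by lia.
    assert (1 <= T q (S n)) by (apply T_ge1; auto; lia).
    assert (0 <= INR (S n) ^ 2 * q (S (S n)) ^ 2) by (apply Rmult_le_pos; apply pow2_ge_0).
    assert (INR (S n) <> 0) by (apply not_0_INR; lia).
    set (X := T q (S n)) in *. set (N := INR (S n)) in *.
    simpl pow. field. repeat split; try lra; apply pow_nonzero; lra.
Qed.

Definition factor_max (m : nat) : R :=
  (if (m =? 1)%nat then 3 / 16 else INR m ^ m / INR (S m) ^ S m) / INR m ^ 2.

(* Equality case of [F1sq_factor q m <= factor_max m]. *)
Definition balanced (q : nat -> R) (m : nat) : Prop :=
  T q m = (if (m =? 1)%nat then 3 else INR m) * (INR m ^ 2 * q (S m) ^ 2).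

Section FactorBound.

Variables (q : nat -> R) (m : nat).
Hypotheses (Hq1 : q 1%nat = 1) (Hm : (1 <= m)%nat) (Hqm : 0 < q (S m)).

Let X := T q m.
Let a := INR m ^ 2 * q (S m) ^ 2.

Lemma factor_data_pos : 0 < X /\ 0 < a /\ 0 < INR m ^ 2.
Proof.
  assert (1 <= INR m) by (apply (le_INR 1); lia).
  assert (1 <= X) by (apply T_ge1; auto).
  repeat split; [lra | apply Rmult_lt_0_compat | ]; apply pow_lt; lra.
Qed.

Lemma F1sq_factor_pos : 0 < F1sq_factor q m.
Proof.
  destruct factor_data_pos as [HX [Ha HM]].
  apply Rdiv_lt_0_compat; [apply amgm_ratio_pos|]; auto.
Qed.

Lemma balanced_F1sq_factor : balanced q m -> F1sq_factor q m = factor_max m.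
Proof.
  destruct factor_data_pos as [HX [Ha HM]].
  unfold balanced, F1sq_factor, factor_max. fold X a. intros ->.
  destruct (Nat.eqb_spec m 1) as [->|].
  - rewrite amgm_ratio1_at; auto.
  - rewrite amgm_ratio_at; auto.
Qed.

Hypothesis Hc2 : 3 * q 2%nat ^ 2 <= 1.

Lemma factor_constraint : m = 1%nat -> 3 * a <= X.
Proof. intros ->. unfold X, a. rewrite T_1, Hq1. simpl. lra. Qed.

Lemma F1sq_factor_le : F1sq_factor q m <= factor_max m.
Proof.
  destruct factor_data_pos as [HX [Ha HM]].
  unfold F1sq_factor, factor_max. fold X a.
  apply Rmult_le_compat_r; [left; apply Rinv_0_lt_compat; auto|].
  destruct (Nat.eqb_spec m 1) as [Em|].
  - rewrite Em at 1. apply amgm_ratio1_le; auto. apply factor_constraint; auto.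
  - apply amgm_ratio_le; auto.
Qed.

Lemma F1sq_factor_balanced : F1sq_factor q m = factor_max m -> balanced q m.
Proof.
  destruct factor_data_pos as [HX [Ha HM]].
  unfold F1sq_factor, factor_max, balanced. fold X a. intro Heq.
  apply Rdiv_eq_reg_r in Heq; [|lra].
  destruct (Nat.eqb_spec m 1) as [Em|].
  - rewrite Em in Heq at 1. apply amgm_ratio1_eq; auto. apply factor_constraint; auto.
  - apply amgm_ratio_eq; auto.
Qed.

End FactorBound.

Definition opt_values (q : nat -> R) (d : nat) : Prop :=
  q 2%nat ^ 2 = 1 / 3 /\ forall i, (3 <= i <= d)%nat -> INR (i - 1) ^ 2 * q i ^ 2 = 2 / 3.

Lemma T_opt_values q d : q 1%nat = 1 -> opt_values q d ->
  forall n, (2 <= n <= d)%nat -> T q n = 2 * INR n / 3.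
Proof.
  intros H1 [H2 Hi]. induction n as [|n IH]; intro Hn; [lia|].
  rewrite T_S by lia.
  destruct (Nat.eq_dec n 1) as [->|].
  - rewrite T_1, H1, H2. simpl. field.
  - rewrite IH by lia. rewrite S_INR.
    specialize (Hi (S n) ltac:(lia)). replace (S n - 1)%nat with n in Hi by lia.
    rewrite Hi. field.
Qed.

Lemma opt_values_balanced q d : q 1%nat = 1 -> opt_values q d ->
  forall m, (1 <= m <= d - 1)%nat -> balanced q m.
Proof.
  intros H1 Hopt m Hm. unfold balanced. destruct (Nat.eqb_spec m 1) as [->|].
  - rewrite T_1, H1, (proj1 Hopt). simpl. field.
  - rewrite (T_opt_values q d H1 Hopt) by lia.
    assert (Hi := proj2 Hopt (S m) ltac:(lia)). replace (S m - 1)%nat with m in Hi by lia.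
    rewrite Hi. field.
Qed.

Lemma balanced_opt_values q d : q 1%nat = 1 -> (2 <= d)%nat ->
  (forall m, (1 <= m <= d - 1)%nat -> balanced q m) -> opt_values q d.
Proof.
  intros H1 Hd Hbal.
  assert (H2 : q 2%nat ^ 2 = 1 / 3).
  { assert (B := Hbal 1%nat ltac:(lia)). unfold balanced in B.
    rewrite T_1, H1 in B. simpl in B. lra. }
  split; auto.
  induction d as [|d IH]; intros i Hi; [lia|].
  destruct (Nat.eq_dec i (S d)) as [->|]; [|apply IH; try lia; intros; apply Hbal; lia].
  assert (Hd' : (3 <= S d)%nat) by lia.
  assert (HT : T q d = 2 * INR d / 3).
  { apply (T_opt_values q d H1); [split; auto | lia].
    intros; apply IH; try lia; intros; apply Hbal; lia. }
  assert (B := Hbal d ltac:(lia)). unfold balanced in B.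
  destruct (Nat.eqb_spec d 1); [lia|].
  replace (S d - 1)%nat with d by lia.
  assert (1 <= INR d) by (apply (le_INR 1); lia).
  apply (Rmult_eq_reg_l (INR d)); [|lra]. rewrite <- B, HT. field.
Qed.

Lemma opt_values_feasible q d : (2 <= d)%nat -> q 1%nat = 1 ->
  (forall i, (1 <= i <= d)%nat -> 0 < q i) -> opt_values q d -> feasible d q.
Proof.
  intros Hd H1 Hpos Hopt. split; [|split]; auto.
  intros j Hj. apply constraint_iff; auto.
  rewrite (T_opt_values q d H1 Hopt) by lia.
  destruct (Nat.eq_dec j 2) as [->|].
  - rewrite (proj1 Hopt). simpl. lra.
  - assert (Hi := proj2 Hopt j ltac:(lia)).
    assert (H3 := le_INR 3 j ltac:(lia)). simpl INR in H3.
    rewrite minus_INR in Hi by lia. simpl INR in Hi.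
    assert (0 <= INR j * (INR j ^ 2 - 3 * INR j + 1)) by nra.
    assert (0 <= q j ^ 2) by apply pow2_ge_0.
    nra.
Qed.

(* Obtained by solving [balanced q m] for [q (S m)], [m = 1, 2, ...], starting from [q 1 = 1]. *)
Definition p_opt (i : nat) : R :=
  if (i =? 1)%nat then 1 else if (i =? 2)%nat then / sqrt 3 else sqrt (2 / 3) / INR (i - 1).

Lemma p_opt_pos i : (1 <= i)%nat -> 0 < p_opt i.
Proof.
  intro Hi. unfold p_opt. destruct (Nat.eqb_spec i 1); [lra|]. destruct (i =? 2)%nat.
  - apply Rinv_0_lt_compat, sqrt_lt_R0; lra.
  - apply Rdiv_lt_0_compat; [apply sqrt_lt_R0; lra | apply lt_0_INR; lia].
Qed.

Lemma opt_values_p_opt d : opt_values p_opt d.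
Proof.
  split.
  - unfold p_opt; simpl Nat.eqb; cbv iota. rewrite pow_inv, pow2_sqrt by lra. field.
  - intros i Hi. unfold p_opt.
    destruct (Nat.eqb_spec i 1), (Nat.eqb_spec i 2); try lia.
    assert (INR (i - 1) <> 0) by (apply not_0_INR; lia).
    unfold Rdiv. rewrite Rpow_mult_distr, pow2_sqrt, pow_inv by lra. field. auto.
Qed.

Lemma p_opt_feasible d : (2 <= d)%nat -> feasible d p_opt.
Proof.
  intro Hd. apply opt_values_feasible; auto using opt_values_p_opt.
  intros i Hi. apply p_opt_pos. lia.
Qed.

Lemma F1_pos d q : (2 <= d)%nat -> feasible d q -> 0 < F1 d q.
Proof.
  intros Hd [Hpos [H1 _]]. unfold F1. apply Rdiv_lt_0_compat.
  - apply prodR_pos. intros; apply Hpos; lia.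
  - apply pow_lt. unfold Defs.D. fold (T q d). apply sqrt_lt_R0.
    assert (1 <= T q d) by (apply T_ge1; auto; lia). lra.
Qed.

Lemma maximizer_opt_values d p : (2 <= d)%nat -> is_maximizer d p -> opt_values p d.
Proof.
  intros Hd [Hp Hmax].
  assert (Hopt := p_opt_feasible d Hd).
  assert (Hle : F1 d p_opt ^ 2 <= F1 d p ^ 2).
  { apply pow_incr. split; [apply Rlt_le, F1_pos | apply Hmax]; auto. }
  destruct Hp as [Hpos [H1 Hcon]].
  assert (Hc2 := feasible_constraint2 d p Hd (conj Hpos (conj H1 Hcon))).
  rewrite !F1_sq_telescope in Hle by (reflexivity || auto || lia).
  erewrite prodR_ext in Hle.
  2: { intros m Hm. apply balanced_F1sq_factor; [reflexivity | lia | apply p_opt_pos; lia |].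
       apply (opt_values_balanced p_opt d); [reflexivity | apply opt_values_p_opt | lia]. }
  apply (balanced_opt_values p d H1 Hd). intros m Hm.
  apply F1sq_factor_balanced; auto; [lia | apply Hpos; lia |].
  apply (prodR_le_eq (F1sq_factor p) factor_max 1 (d - 1)); [| exact Hle | lia].
  intros i Hi. split; [apply F1sq_factor_pos | apply F1sq_factor_le]; auto; try lia; apply Hpos; lia.
Qed.

Lemma upd_same p j t : upd p j t j = t.
Proof. unfold upd. rewrite Nat.eqb_refl. reflexivity. Qed.

Lemma upd_neq p j t i : i <> j -> upd p j t i = p i.
Proof. intro H; unfold upd. destruct (Nat.eqb_spec i j); [lia | reflexivity]. Qed.

Lemma upd_id p j i : upd p j (p j) i = p i.
Proof. unfold upd. destruct (Nat.eqb_spec i j); subst; reflexivity. Qed.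

Lemma prodR_upd p j t m k : (m <= j < m + k)%nat ->
  prodR (upd p j t) m k = t * prodR (upd p j 1) m k.
Proof.
  revert m; induction k as [|k IH]; intros m H; [lia|]. cbn [prodR].
  destruct (Nat.eq_dec m j) as [->|Hne].
  - rewrite !upd_same, (prodR_ext (upd p j t) (upd p j 1)); [ring|].
    intros i Hi. rewrite !upd_neq by lia. reflexivity.
  - rewrite !upd_neq, IH by lia. ring.
Qed.

Lemma sumR_upd_sq (c : nat -> R) p j t m k : (m <= j < m + k)%nat ->
  sumR (fun i => c i * upd p j t i ^ 2) m k =
  sumR (fun i => c i * upd p j 0 i ^ 2) m k + c j * t ^ 2.
Proof.
  revert m; induction k as [|k IH]; intros m H; [lia|]. cbn [sumR].
  destruct (Nat.eq_dec m j) as [->|Hne].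
  - rewrite !upd_same.
    rewrite (sumR_ext (fun i => c i * upd p j t i ^ 2) (fun i => c i * upd p j 0 i ^ 2)); [ring|].
    intros i Hi. rewrite !upd_neq by lia. reflexivity.
  - rewrite !upd_neq, IH by lia. ring.
Qed.

Lemma is_derive_lin_div_sqrt_pow (P A c x : R) (d : nat) : (1 <= d)%nat -> 1 <= A -> 0 <= c ->
  is_derive (fun t => t * P / sqrt (A + c * t ^ 2) ^ d) x
    (P / sqrt (A + c * x ^ 2) ^ d * (1 - INR d * c * x ^ 2 / (A + c * x ^ 2))).
Proof.
  intros Hd HA Hc.
  assert (HQ : 1 <= A + c * x ^ 2) by (assert (0 <= x ^ 2) by apply pow2_ge_0; nra).
  assert (HS0 : 0 < sqrt (A + c * x ^ 2)) by (apply sqrt_lt_R0; lra).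
  assert (HS : sqrt (A + c * x ^ 2) ^ 2 = A + c * x ^ 2) by (apply pow2_sqrt; lra).
  auto_derive; replace (A + c * (x * (x * 1))) with (A + c * x ^ 2) by ring.
  - repeat split; [lra | apply pow_nonzero; lra].
  - set (Sq := sqrt (A + c * x ^ 2)) in *. rewrite <- HS.
    destruct d as [|d']; [lia|]. simpl pred. change (Sq ^ S d') with (Sq * Sq ^ d').
    assert (0 < Sq ^ d') by (apply pow_lt; lra).
    field. lra.
Qed.

Lemma partial_F1 d p j : p 1%nat = 1 -> (2 <= j <= d)%nat ->
  partial (F1 d) j p =
  prodR (upd p j 1) 2 (d - 1) / sqrt (T p d) ^ d * (1 - INR d * w 1 j ^ 2 * p j ^ 2 / T p d).
Proof.
  intros H1 Hj. unfold partial.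
  set (A := sumR (fun i => w 1 i ^ 2 * upd p j 0 i ^ 2) 1 d).
  set (P := prodR (upd p j 1) 2 (d - 1)).
  assert (E : A + w 1 j ^ 2 * p j ^ 2 = T p d).
  { unfold A, T. rewrite <- (sumR_upd_sq (fun i => w 1 i ^ 2)) by lia.
    apply sumR_ext. intros. rewrite upd_id. reflexivity. }
  assert (HA : 1 <= A).
  { unfold A. fold (T (upd p j 0) d). apply T_ge1; [|lia]. rewrite upd_neq by lia. auto. }
  rewrite (Derive_ext _ (fun t => t * P / sqrt (A + w 1 j ^ 2 * t ^ 2) ^ d)).
  - rewrite <- E. apply is_derive_unique, is_derive_lin_div_sqrt_pow; auto using pow2_ge_0; lia.
  - intro t. unfold F1, Defs.D. rewrite prodR_upd, (sumR_upd_sq (fun i => w 1 i ^ 2)) by lia.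
    reflexivity.
Qed.

Lemma partial_constraint d p i j : (2 <= j <= d)%nat ->
  partial (fun q => Defs.D d i q ^ 2 - Defs.D d 1 q ^ 2) j p = 2 * p j * (w i j ^ 2 - w 1 j ^ 2).
Proof.
  intros Hj. unfold partial.
  set (Ai := sumR (fun k => w i k ^ 2 * upd p j 0 k ^ 2) 1 d).
  set (A1 := sumR (fun k => w 1 k ^ 2 * upd p j 0 k ^ 2) 1 d).
  rewrite (Derive_ext _ (fun t => (Ai + w i j ^ 2 * t ^ 2) - (A1 + w 1 j ^ 2 * t ^ 2))).
  - apply is_derive_unique. auto_derive; auto. ring.
  - intro t. unfold Defs.D. rewrite !pow2_sqrt.
    + rewrite (sumR_upd_sq (fun k => w i k ^ 2)), (sumR_upd_sq (fun k => w 1 k ^ 2)) by lia.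
      reflexivity.
    + apply sumR_nonneg; intros; apply Rmult_le_pos; apply pow2_ge_0.
    + apply sumR_nonneg; intros; apply Rmult_le_pos; apply pow2_ge_0.
Qed.

Lemma partial_F1_opt_vanish d p j : p 1%nat = 1 -> opt_values p d -> (3 <= j <= d)%nat ->
  partial (F1 d) j p = 0.
Proof.
  intros H1 Hopt Hj.
  rewrite partial_F1, w_above, Rmult_assoc, (proj2 Hopt j Hj) by (auto || lia).
  rewrite (T_opt_values p d H1 Hopt d) by lia.
  assert (2 <= INR d) by (apply (le_INR 2); lia).
  replace (1 - INR d * (2 / 3) / (2 * INR d / 3)) with 0 by (field; lra). ring.
Qed.

Lemma partial_F1_opt_2_pos d p : (2 <= d)%nat -> p 1%nat = 1 -> opt_values p d ->
  (forall i, (1 <= i <= d)%nat -> 0 < p i) -> 0 < partial (F1 d) 2 p.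
Proof.
  intros Hd H1 Hopt Hpos.
  rewrite partial_F1, w_above, (proj1 Hopt), (T_opt_values p d H1 Hopt d) by (auto || lia).
  assert (2 <= INR d) by (apply (le_INR 2); lia).
  apply Rmult_lt_0_compat.
  - apply Rdiv_lt_0_compat.
    + apply prodR_pos. intros i Hi. unfold upd. destruct (i =? 2)%nat; [lra | apply Hpos; lia].
    + apply pow_lt, sqrt_lt_R0. lra.
  - simpl INR. replace (1 - INR d * 1 ^ 2 * (1 / 3) / (2 * INR d / 3)) with (1 / 2) by (field; lra).
    lra.
Qed.

Theorem lemma5 (d : nat) (hd : (2 <= d)%nat) (pstar : nat -> R) :
  is_maximizer d pstar ->
  exists mu : nat -> R, KKT d pstar mu /\
    exists k : nat, (2 <= k <= d)%nat /\ 0 < mu k.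
Proof.
  intro Hmax.
  assert (Hopt := maximizer_opt_values d pstar hd Hmax).
  destruct Hmax as [[Hpos [H1 Hcon]] _].
  assert (Hp2 : 0 < pstar 2%nat) by (apply Hpos; lia).
  set (mu2 := partial (F1 d) 2 pstar / (6 * pstar 2%nat)).
  assert (Hmu2 : 0 < mu2)
    by (apply Rdiv_lt_0_compat; [apply partial_F1_opt_2_pos | lra]; auto).
  exists (fun i => if (i =? 2)%nat then mu2 else 0). split.
  2: { exists 2%nat. split; [lia | exact Hmu2]. }
  intros j Hj. repeat split.
  - rewrite sumR_single, partial_constraint by lia.
    destruct (Nat.eqb_spec j 2) as [->|].
    + rewrite w_diag, w_above by lia. unfold mu2. simpl INR. field. lra.
    + rewrite partial_F1_opt_vanish, (w_above 2 j), (w_above 1 j) by (auto || lia). ring.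
  - destruct (Nat.eqb_spec j 2) as [->|]; [|ring].
    rewrite Dj_sq, D1_sq, (T_opt_values pstar d H1 Hopt 2), (proj1 Hopt) by lia.
    simpl INR. field.
  - destruct (Nat.eqb_spec j 2); lra.
  - assert (0 <= Defs.D d j pstar) by apply sqrt_pos.
    assert (0 <= Defs.D d 1 pstar) by apply sqrt_pos.
    assert (Hc := Hcon j Hj). nra.
Qed.
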